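(* Let $m_1,m_2$ be reactive monitors and $t\in\mathrm{Act}^\omega$. Then: (1) $m_1\otimes m_2$ rejects $t$ iff $m_1$ rejects $t$ or $m_2$ rejects $t$; (2) $m_1\otimes m_2$ accepts $t$ iff both $m_1$ and $m_2$ accept $t$; (3) $m_1\oplus m_2$ rejects $t$ iff both $m_1$ and $m_2$ reject $t$; (4) $m_1\oplus m_2$ accepts $t$ iff $m_1$ accepts $t$ or $m_2$ accepts $t$.
   Context: Fix a finite set $\mathrm{Act}$ of external actions and an internal action $\tau\notin\mathrm{Act}$. Monitors are given by $m,n ::= v \mid a.m \mid m+n \mid \mathrm{rec}\,x.m \mid x \mid m\otimes n\mid m\oplus n$ with verdicts $v::=\mathrm{end}\mid\mathrm{no}\mid\mathrm{yes}$. Monitor transitions ($\mu\in\mathrm{Act}\cup\{\tau\}$, $a\in\mathrm{Act}$, $\odot\in\{\otimes,\oplus\}$) are the least relation with: $a.m\xrightarrow{a}m$; $\mathrm{rec}\,x.m\xrightarrow{\tau}m[\mathrm{rec}\,x.m/x]$; if $m\xrightarrow{\mu}m'$ then $m+n\xrightarrow{\mu}m'$ and $n+m\xrightarrow{\mu}m'$; $v\xrightarrow{a}v$ for every verdict; if $m\xrightarrow{a}m'$ and $n\xrightarrow{a}n'$ then $m\odot n\xrightarrow{a}m'\odot n'$; if $m\xrightarrow{\tau}m'$ then $m\odot n\xrightarrow{\tau}m'\odot n$ and $n\odot m\xrightarrow{\tau}n\odot m'$; $\mathrm{end}\odot\mathrm{end}\xrightarrow{\tau}\mathrm{end}$; $\mathrm{yes}\otimes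 m\xrightarrow{\tau}m$, $m\otimes\mathrm{yes}\xrightarrow{\tau}m$, $\mathrm{no}\otimes m\xrightarrow{\tau}\mathrm{no}$, $m\otimes\mathrm{no}\xrightarrow{\tau}\mathrm{no}$, $\mathrm{no}\oplus m\xrightarrow{\tau}m$, $m\oplus\mathrm{no}\xrightarrow{\tau}m$, $\mathrm{yes}\oplus m\xrightarrow{\tau}\mathrm{yes}$, $m\oplus\mathrm{yes}\xrightarrow{\tau}\mathrm{yes}$. Weak transitions: $r\Rightarrow r'$ means $r(\xrightarrow{\tau})^*r'$, $r\overset{a}{\Longrightarrow}r'$ means $r\Rightarrow\cdot\xrightarrow{a}\cdot\Rightarrow r'$, extended to finite traces by concatenation. Processes are states of an arbitrary LTS with labels in $\mathrm{Act}\cup\{\tau\}$; the instrumented system $m\triangleleft p$ has transitions: if $p\xrightarrow{a}p'$ and $m\xrightarrow{a}m'$ then $m\triangleleft p\xrightarrow{a}m'\triangleleft p'$; if $p\xrightarrow{a}p'$ and $m$ has neither an $a$- nor a $\tau$-transition then $m\triangleleft p\xrightarrow{a}\mathrm{end}\triangleleft p'$; if $p\xrightarrow{\tau}p'$ then $m\triangleleft p\xrightarrow{\tau}m\triangleleft p'$; if $m\xrightarrow{\tau}m'$ then $m\triangleleft p\xrightarrow{\tau}m'\triangleleft p$. A monitor $m$ rejects (resp. accepts) a finite trace $s\in\mathrm{Act}^*$ if there exist a process $p$ of some LTS and a process $p'$ with $m\triangleleft p\overset{s}{\Longrightarrow}\mathrm{no}\triangleleft p'$ (resp. $\mathrm{yes}\triangleleft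 p'$); $m$ rejects (resp. accepts) an infinite trace $t\in\mathrm{Act}^\omega$ if it rejects (resp. accepts) some finite prefix of $t$. A monitor $m$ is reactive if for every $n$ reachable from $m$ by a finite sequence of transitions (labels in $\mathrm{Act}\cup\{\tau\}$) and every $a\in\mathrm{Act}$ there is $n'$ with $n\overset{a}{\Longrightarrow}n'$. *)

From mathcomp Require Import all_boot.
From Stdlib Require Import Relations.

Set Implicit Arguments.
Unset Strict Implicit.
Unset Printing Implicit Defensive.

Inductive verdict := Vend | Vno | Vyes.

(* Monitor syntax; recursion variables are de Bruijn indices
   (rec binds index 0). *)
Inductive mon (A : Type) : Type :=
| MVerd : verdict -> mon A
| MPre  : A -> mon A -> mon A
| MSum  : mon A -> mon A -> mon A
| MRec  : mon A -> mon A
| MVar  : nat -> mon A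
| MConj : mon A -> mon A -> mon A       (* m (x) n *)
| MDisj : mon A -> mon A -> mon A.      (* m (+) n *)
Arguments MVerd {A}.
Arguments MVar {A}.

Fixpoint mlift (A : Type) (c : nat) (m : mon A) : mon A :=
  match m with
  | MVerd v => MVerd v
  | MPre a m => MPre a (mlift c m)
  | MSum m n => MSum (mlift c m) (mlift c n)
  | MRec m => MRec (mlift c.+1 m)
  | MVar k => if k < c then MVar k else MVar k.+1
  | MConj m n => MConj (mlift c m) (mlift c n)
  | MDisj m n => MDisj (mlift c m) (mlift c n)
  end.

Fixpoint msubst (A : Type) (n : mon A) (k : nat) (m : mon A) : mon A :=
  match m with
  | MVerd v => MVerd v
  | MPre a m => MPre a (msubst n k m)
  | MSum m1 m2 => MSum (msubst n k m1) (msubst n k m2)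
  | MRec m => MRec (msubst (mlift 0 n) k.+1 m)
  | MVar j => if j == k then n else if j < k then MVar j else MVar j.-1
  | MConj m1 m2 => MConj (msubst n k m1) (msubst n k m2)
  | MDisj m1 m2 => MDisj (msubst n k m1) (msubst n k m2)
  end.

(* Labels: Some a = external action a, None = tau *)
Inductive mstep (A : Type) : mon A -> option A -> mon A -> Prop :=
| MS_pre a m : mstep (MPre a m) (Some a) m
| MS_rec m : mstep (MRec m) None (msubst (MRec m) 0 m)
| MS_sumL m n mu m' : mstep m mu m' -> mstep (MSum m n) mu m'
| MS_sumR m n mu m' : mstep m mu m' -> mstep (MSum n m) mu m'
| MS_verd v a : mstep (MVerd v) (Some a) (MVerd v)
| MS_conj_sync m n m' n' a :
    mstep m (Some a) m' -> mstep n (Some a) n' -> mstep (MConj m n) (Some a) (MConj m' n')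
| MS_disj_sync m n m' n' a :
    mstep m (Some a) m' -> mstep n (Some a) n' -> mstep (MDisj m n) (Some a) (MDisj m' n')
| MS_conj_tauL m m' n : mstep m None m' -> mstep (MConj m n) None (MConj m' n)
| MS_conj_tauR m m' n : mstep m None m' -> mstep (MConj n m) None (MConj n m')
| MS_disj_tauL m m' n : mstep m None m' -> mstep (MDisj m n) None (MDisj m' n)
| MS_disj_tauR m m' n : mstep m None m' -> mstep (MDisj n m) None (MDisj n m')
| MS_conj_end : mstep (MConj (MVerd Vend) (MVerd Vend)) None (MVerd Vend)
| MS_disj_end : mstep (MDisj (MVerd Vend) (MVerd Vend)) None (MVerd Vend)
| MS_conj_yesL m : mstep (MConj (MVerd Vyes) m) None m
| MS_conj_yesR m : mstep (MConj m (MVerd Vyes)) None m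
| MS_conj_noL m : mstep (MConj (MVerd Vno) m) None (MVerd Vno)
| MS_conj_noR m : mstep (MConj m (MVerd Vno)) None (MVerd Vno)
| MS_disj_noL m : mstep (MDisj (MVerd Vno) m) None m
| MS_disj_noR m : mstep (MDisj m (MVerd Vno)) None m
| MS_disj_yesL m : mstep (MDisj (MVerd Vyes) m) None (MVerd Vyes)
| MS_disj_yesR m : mstep (MDisj m (MVerd Vyes)) None (MVerd Vyes).

Definition tau_star (A S : Type) (step : S -> option A -> S -> Prop) : relation S :=
  clos_refl_trans S (fun x y => step x None y).

Inductive wtrace (A S : Type) (step : S -> option A -> S -> Prop) :
  S -> seq A -> S -> Prop :=
| WT_nil r r' : tau_star step r r' -> wtrace step r [::] r'
| WT_cons r r1 r2 r' a s :
    tau_star step r r1 -> step r1 (Some a) r2 -> wtrace step r2 s r' ->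
    wtrace step r (a :: s) r'.

Definition wstep (A S : Type) (step : S -> option A -> S -> Prop) (r : S) (a : A) (r' : S) :=
  wtrace step r [:: a] r'.

Inductive istep (A P : Type) (pstep : P -> option A -> P -> Prop) :
  mon A * P -> option A -> mon A * P -> Prop :=
| IS_mon m m' p p' a :
    pstep p (Some a) p' -> mstep m (Some a) m' -> istep pstep (m, p) (Some a) (m', p')
| IS_term m p p' a :
    pstep p (Some a) p' -> ~ (exists m', mstep m (Some a) m') -> ~ (exists m', mstep m None m') ->
    istep pstep (m, p) (Some a) (MVerd Vend, p')
| IS_ptau m p p' : pstep p None p' -> istep pstep (m, p) None (m, p')
| IS_mtau m m' p : mstep m None m' -> istep pstep (m, p) None (m', p).

Definition reaches_fin (A : Type) (m : mon A) (s : seq A) (v : verdict) : Prop :=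
  exists (P : Type) (pstep : P -> option A -> P -> Prop) (p p' : P),
    wtrace (istep pstep) (m, p) s (MVerd v, p').

Definition rejects_fin (A : Type) (m : mon A) (s : seq A) := reaches_fin m s Vno.
Definition accepts_fin (A : Type) (m : mon A) (s : seq A) := reaches_fin m s Vyes.

(* infinite traces as streams nat -> A; prefix of length n *)
Definition prefix (A : Type) (t : nat -> A) (n : nat) : seq A := map t (iota 0 n).

Definition rejects_inf (A : Type) (m : mon A) (t : nat -> A) :=
  exists n, rejects_fin m (prefix t n).
Definition accepts_inf (A : Type) (m : mon A) (t : nat -> A) :=
  exists n, accepts_fin m (prefix t n).

Definition mreach (A : Type) : relation (mon A) :=
  clos_refl_trans (mon A) (fun x y => exists mu, mstep x mu y).

Definition reactive (A : Type) (m : mon A) : Prop :=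
  forall n, mreach m n -> forall a : A, exists n', wstep (@mstep A) n a n'.

From Pilot Require Import Defs.
From mathcomp Require Import all_boot.
From Stdlib Require Import Relations.

Set Implicit Arguments.
Unset Strict Implicit.
Unset Printing Implicit Defensive.

(* Both composite monitors follow the same rules: they run their two components in
   lockstep until one of them reaches a verdict, which is then either a unit for the
   composite (yes for the conjunction, no for the disjunction: the composite continues
   as the other component) or absorbing (no for the conjunction, yes for the
   disjunction).  Hence the composite reaches the absorbing verdict on a prefix of t
   iff one component does -- the other can keep pace with t because it is reactive --
   and it reaches the unit verdict iff both components do, the first one to finish
   handing over to the other.  A verdict other than end is reached by the instrumented
   system iff it is reached by the monitor alone. *)

Section WeakTraces.
Variables (A S : Type) (step : S -> option A -> S -> Prop).

Inductive steps : S -> seq A -> S -> Prop :=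
| steps_nil x : steps x [::] x
| steps_tau x y s z : step x None y -> steps y s z -> steps x s z
| steps_act x y a s z : step x (Some a) y -> steps y s z -> steps x (a :: s) z.

Lemma steps_cat x s1 y s2 z : steps x s1 y -> steps y s2 z -> steps x (s1 ++ s2) z.
Proof.
elim=> [//| x1 y1 s z1 H _ IH | x1 y1 a s z1 H _ IH] Hz; first exact: steps_tau (IH Hz).
exact: steps_act (IH Hz).
Qed.

Lemma steps_rcons_tau x s y y' : steps x s y -> step y None y' -> steps x s y'.
Proof.
move=> Hxy Hyy'; rewrite -[s]cats0.
exact: steps_cat Hxy (steps_tau Hyy' (steps_nil _)).
Qed.

Lemma steps_catP x s1 s2 z :
  steps x (s1 ++ s2) z -> exists2 y, steps x s1 y & steps y s2 z.
Proof.
move eq_s: (s1 ++ s2) => s H.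
elim: H s1 eq_s => [x1 | x1 y s' z1 H _ IH | x1 y a s' z1 H Hy IH] s1.
- by case: s1 => //= ->; exists x1; constructor.
- by move=> /IH[y1 Hxy1 Hy1z]; exists y1 => //; apply: steps_tau H Hxy1.
- case: s1 => [/= -> | b s1 [-> /IH[y1 Hxy1 Hy1z]]].
    by exists x1; [constructor | apply: steps_act H Hy].
  by exists y1 => //; apply: steps_act H Hxy1.
Qed.

Lemma steps_consP x a s z : steps x (a :: s) z ->
  exists x1 x2, [/\ steps x [::] x1, step x1 (Some a) x2 & steps x2 s z].
Proof.
move eq_s: (a :: s) => s' H.
elim: H eq_s => [//| x1 y s1 z1 H _ IH | x1 y b s1 z1 H Hy _ [-> ->]].
- by move=> /IH[x2 [x3 [H1 H2 H3]]]; exists x2, x3; split=> //; apply: steps_tau H H1.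
- by exists x1, y; split=> //; constructor.
Qed.

Lemma steps_nil_hom (f : S -> S) :
  (forall x y, step x None y -> step (f x) None (f y)) ->
  forall x y, steps x [::] y -> steps (f x) [::] (f y).
Proof.
move=> Hf x y; move eq_s: [::] => s H; elim: H eq_s => [x1 | x1 y1 s1 z H _ IH | //] eq_s.
- exact: steps_nil.
- exact: steps_tau (Hf _ _ H) (IH eq_s).
Qed.

Lemma tau_star_steps x y : tau_star step x y -> steps x [::] y.
Proof.
move=> /(clos_rt_rt1n S) H; elim: H => [x1 | x1 y1 z1 H _ IH].
- exact: steps_nil.
- exact: steps_tau H IH.
Qed.

Lemma wtrace_tau x y s z : step x None y -> wtrace step y s z -> wtrace step x s z.
Proof.
move=> Hxy Hyz; have Hx : tau_star step x y by apply: rt_step.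
case: Hyz Hx => [r r' H | r r1 r2 r' a s' H H1 H2] Hx.
- exact: WT_nil (rt_trans _ _ _ _ _ Hx H).
- exact: WT_cons (rt_trans _ _ _ _ _ Hx H) H1 H2.
Qed.

Lemma wtraceP x s z : wtrace step x s z <-> steps x s z.
Proof.
split.
- elim=> [r r' /tau_star_steps // | r r1 r2 r' a s' /tau_star_steps H1 H12 _ IH].
  by rewrite -[a :: s']cat0s; apply: steps_cat H1 (steps_act H12 IH).
- elim=> [x1 | x1 y1 s1 z1 H _ IH | x1 y1 a s1 z1 H _ IH].
  + exact/WT_nil/rt_refl.
  + exact: wtrace_tau H IH.
  + exact: WT_cons (rt_refl _ _ _) H IH.
Qed.

End WeakTraces.

Arguments steps_nil {A S step x}.

Lemma verdict_steps (A : Type) v s (r : mon A) :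
  steps (@mstep A) (MVerd v) s r -> r = MVerd v.
Proof.
move eq_x: (MVerd v) => x H.
elim: H eq_x => [// | x1 y s1 z H _ IH | x1 y a s1 z H _ IH] eq_x.
- by rewrite -eq_x in H; inversion H.
- by rewrite -eq_x in H; inversion H; subst; apply: IH.
Qed.

Lemma steps_mreach (A : Type) (m : mon A) s n : steps (@mstep A) m s n -> mreach m n.
Proof.
elim=> [x | x y s1 z H _ IH | x y a s1 z H _ IH]; first exact: rt_refl.
- exact: rt_trans (rt_step _ _ _ _ (ex_intro _ None H)) IH.
- exact: rt_trans (rt_step _ _ _ _ (ex_intro _ (Some a) H)) IH.
Qed.

(* The instrumented system can only add a transition of the monitor to end, from
   which no other verdict is ever reached. *)
Lemma istep_steps_monitor (A P : Type) (pstep : P -> option A -> P -> Prop) x s y :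
  steps (istep pstep) x s y -> y.1 = MVerd Vend \/ steps (@mstep A) x.1 s y.1.
Proof.
elim=> [x1 | x1 y1 s1 z H _ IH | x1 y1 a s1 z H _ IH]; first by right; constructor.
- inversion H; subst => //=; case: IH => [|IH]; [by left | right].
  exact: steps_tau IH.
- inversion H; subst => /=; case: IH => [|IH]; [by left | right | by left | left].
  + exact: steps_act IH.
  + exact: verdict_steps IH.
Qed.

Lemma reaches_finP (A : Type) (m : mon A) s v :
  v <> Vend -> reaches_fin m s v <-> steps (@mstep A) m s (MVerd v).
Proof.
move=> v_not_end; split.
- move=> [P [pstep [p [p' /wtraceP /istep_steps_monitor /= [[]|//]]]]].
  by move/v_not_end.
- pose chaos : unit -> option A -> unit -> Prop := fun _ _ _ => True.
  have lift_run x s' y : steps (@mstep A) x s' y -> steps (istep chaos) (x, tt) s' (y, tt).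
    elim=> [x1 | x1 y1 s1 z H _ IH | x1 y1 a s1 z H _ IH]; first exact: steps_nil.
    + by apply: steps_tau IH; apply: IS_mtau.
    + exact: steps_act (IS_mon (m := x1) (p := tt) (p' := tt) I H) IH.
  by move=> Hm; exists unit, chaos, tt, tt; apply/wtraceP/lift_run.
Qed.

Arguments reaches_finP {A m s v}.

Lemma reactive_steps (A : Type) (m n : mon A) s :
  reactive m -> steps (@mstep A) m s n -> reactive n.
Proof.
by move=> Hm /steps_mreach Hmn n' Hnn'; apply: Hm; apply: rt_trans Hmn Hnn'.
Qed.

Lemma reactive_run (A : Type) (s : seq A) (m : mon A) :
  reactive m -> exists m', steps (@mstep A) m s m'.
Proof.
elim: s m => [|a s IH] m Hm; first by exists m; constructor.
have [m1 /wtraceP Hm1] := Hm m (rt_refl _ _ _) a.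
have [m' Hm'] := IH _ (reactive_steps Hm Hm1).
by exists m'; rewrite -cat1s; apply: steps_cat Hm1 Hm'.
Qed.

Lemma prefix_catl (A : Type) (t : nat -> A) n s1 s2 :
  s1 ++ s2 = Defs.prefix t n -> s1 = Defs.prefix t (size s1).
Proof.
by rewrite /Defs.prefix; elim: s1 n 0 => [//| a s1 IH] [//| n] i /= [-> /IH {1}->].
Qed.

Lemma prefix_leq (A : Type) (t : nat -> A) n1 n2 :
  n1 <= n2 -> exists r, Defs.prefix t n2 = Defs.prefix t n1 ++ r.
Proof. by move=> le_n12; rewrite /Defs.prefix -(subnKC le_n12) iotaD map_cat; eexists. Qed.

Definition reaches_before (A : Type) (m : mon A) (s : seq A) (v : verdict) :=
  exists s1 s2, s = s1 ++ s2 /\ steps (@mstep A) m s1 (MVerd v).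

Definition reaches_inf (A : Type) (m : mon A) (t : nat -> A) (v : verdict) :=
  exists n, reaches_fin m (Defs.prefix t n) v.

Section ReachesBefore.
Variables (A : Type) (v : verdict).

Lemma reaches_before_steps (m : mon A) s :
  steps (@mstep A) m s (MVerd v) -> reaches_before m s v.
Proof. by move=> H; exists s, [::]; rewrite cats0. Qed.

Lemma reaches_before_verdict (s : seq A) : reaches_before (MVerd v) s v.
Proof. by exists [::], s; split=> //; constructor. Qed.

Lemma reaches_before_tau (m m' : mon A) s :
  mstep m None m' -> reaches_before m' s v -> reaches_before m s v.
Proof. by move=> H [s1 [s2 [-> H1]]]; exists s1, s2; split=> //; apply: steps_tau H H1. Qed.

Lemma reaches_before_act (m m' : mon A) a s :
  mstep m (Some a) m' -> reaches_before m' s v -> reaches_before m (a :: s) v.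
Proof.
by move=> H [s1 [s2 [-> H1]]]; exists (a :: s1), s2; split=> //; apply: steps_act H H1.
Qed.

Lemma reaches_before_prefix (m : mon A) t n :
  v <> Vend -> reaches_before m (Defs.prefix t n) v -> reaches_inf m t v.
Proof.
move=> v_not_end [s1 [s2 [eq_s Hs1]]]; exists (size s1).
by apply/reaches_finP => //; rewrite -(prefix_catl (esym eq_s)).
Qed.

End ReachesBefore.

Section Combinator.
Variables (A : Type) (g : mon A -> mon A -> mon A) (u z : verdict).

(* The rules of [mstep] for a binary composite [g] in which the verdict [u] is a unit
   and [z] is absorbing: [MConj] with [Vyes], [Vno] and [MDisj] with [Vno], [Vyes]. *)
Inductive combinator_step : mon A -> mon A -> option A -> mon A -> Prop :=
| CS_tauL a a' b : mstep a None a' -> combinator_step a b None (g a' b)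
| CS_tauR a b b' : mstep b None b' -> combinator_step a b None (g a b')
| CS_sync a a' b b' c :
    mstep a (Some c) a' -> mstep b (Some c) b' -> combinator_step a b (Some c) (g a' b')
| CS_end : combinator_step (MVerd Vend) (MVerd Vend) None (MVerd Vend)
| CS_unitL b : combinator_step (MVerd u) b None b
| CS_unitR a : combinator_step a (MVerd u) None a
| CS_zeroL b : combinator_step (MVerd z) b None (MVerd z)
| CS_zeroR a : combinator_step a (MVerd z) None (MVerd z).

Hypothesis g_stepP : forall a b mu r, mstep (g a b) mu r <-> combinator_step a b mu r.
Hypothesis g_not_verdict : forall a b v, g a b <> MVerd v.
Hypotheses (u_not_end : u <> Vend) (z_not_end : z <> Vend) (u_neq_z : u <> z).

Lemma steps_combinator a s a' b b' :
  steps (@mstep A) a s a' -> steps (@mstep A) b s b' ->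
  steps (@mstep A) (g a b) s (g a' b').
Proof.
have tauR x : forall y y', mstep y None y' -> mstep (g x y) None (g x y').
  by move=> y y' H; apply/g_stepP/CS_tauR.
move=> Ha; elim: Ha b b' => [x | x y s1 r H _ IH | x y c s1 r H _ IH] b b' Hb.
- exact: steps_nil_hom (tauR x) _ _ Hb.
- by apply: steps_tau (IH _ _ Hb); apply/g_stepP/CS_tauL.
- have [b1 [b2 [Hb1 Hb12 Hb2]]] := steps_consP Hb.
  rewrite -[c :: s1]cat0s; apply: steps_cat (steps_nil_hom (tauR x) Hb1) _.
  by apply: steps_act (IH _ _ Hb2); apply/g_stepP/CS_sync.
Qed.

Lemma combinator_steps_zero a b s :
  steps (@mstep A) (g a b) s (MVerd z) -> reaches_before a s z \/ reaches_before b s z.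
Proof.
move eq_x: (g a b) => x; move eq_r: (MVerd z) => r H.
elim: H a b eq_x eq_r => [x1 | x1 y s1 r1 H Hy IH | x1 y c s1 r1 H _ IH] a b eq_x eq_r.
all: subst x1.
- by move/esym/g_not_verdict: eq_r.
- subst r1; move/g_stepP: H => H; inversion H; subst.
  + by case: (IH _ _ erefl erefl) => Hb; [left; apply: reaches_before_tau Hb | right].
  + by case: (IH _ _ erefl erefl) => Hb; [left | right; apply: reaches_before_tau Hb].
  + by move: (verdict_steps Hy) => [/z_not_end].
  + by right; apply: reaches_before_steps.
  + by left; apply: reaches_before_steps.
  + by left; apply: reaches_before_verdict.
  + by right; apply: reaches_before_verdict.
- subst r1; move/g_stepP: H => H; inversion H; subst.
  by case: (IH _ _ erefl erefl) => Hb; [left | right]; apply: reaches_before_act Hb.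
Qed.

Lemma combinator_steps_unit a b s :
  steps (@mstep A) (g a b) s (MVerd u) -> reaches_before a s u /\ reaches_before b s u.
Proof.
move eq_x: (g a b) => x; move eq_r: (MVerd u) => r H.
elim: H a b eq_x eq_r => [x1 | x1 y s1 r1 H Hy IH | x1 y c s1 r1 H _ IH] a b eq_x eq_r.
all: subst x1.
- by move/esym/g_not_verdict: eq_r.
- subst r1; move/g_stepP: H => H; inversion H; subst.
  + by case: (IH _ _ erefl erefl) => Ha Hb; split=> //; apply: reaches_before_tau Ha.
  + by case: (IH _ _ erefl erefl) => Ha Hb; split=> //; apply: reaches_before_tau Hb.
  + by move: (verdict_steps Hy) => [/u_not_end].
  + by split; [apply: reaches_before_verdict | apply: reaches_before_steps].
  + by split; [apply: reaches_before_steps | apply: reaches_before_verdict].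
  + by move: (verdict_steps Hy) => [/u_neq_z].
  + by move: (verdict_steps Hy) => [/u_neq_z].
- subst r1; move/g_stepP: H => H; inversion H; subst.
  by case: (IH _ _ erefl erefl) => Ha Hb; split; apply: reaches_before_act; eassumption.
Qed.

Lemma steps_combinator_unitl a b s r :
  steps (@mstep A) a s (MVerd u) -> steps (@mstep A) b (s ++ r) (MVerd u) ->
  steps (@mstep A) (g a b) (s ++ r) (MVerd u).
Proof.
move=> Ha Hb; have [b1 Hb1 Hb1u] := steps_catP Hb.
apply: steps_cat (steps_rcons_tau (steps_combinator Ha Hb1) _) Hb1u.
exact/g_stepP/CS_unitL.
Qed.

Lemma steps_combinator_unitr a b s r :
  steps (@mstep A) a (s ++ r) (MVerd u) -> steps (@mstep A) b s (MVerd u) ->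
  steps (@mstep A) (g a b) (s ++ r) (MVerd u).
Proof.
move=> Ha Hb; have [a1 Ha1 Ha1u] := steps_catP Ha.
apply: steps_cat (steps_rcons_tau (steps_combinator Ha1 Hb) _) Ha1u.
exact/g_stepP/CS_unitR.
Qed.

Lemma combinator_reaches_zero_inf m1 m2 t : reactive m1 -> reactive m2 ->
  reaches_inf (g m1 m2) t z <-> reaches_inf m1 t z \/ reaches_inf m2 t z.
Proof.
move=> R1 R2; split.
  move=> [n /(reaches_finP z_not_end) /combinator_steps_zero].
  by case=> /(reaches_before_prefix z_not_end); [left | right].
case=> -[n /(reaches_finP z_not_end) Hm]; exists n; apply/(reaches_finP z_not_end).
- have [m2' Hm2] := reactive_run (Defs.prefix t n) R2.
  by apply: steps_rcons_tau (steps_combinator Hm Hm2) _; apply/g_stepP/CS_zeroL.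
- have [m1' Hm1] := reactive_run (Defs.prefix t n) R1.
  by apply: steps_rcons_tau (steps_combinator Hm1 Hm) _; apply/g_stepP/CS_zeroR.
Qed.

Lemma combinator_reaches_unit_inf m1 m2 t :
  reaches_inf (g m1 m2) t u <-> reaches_inf m1 t u /\ reaches_inf m2 t u.
Proof.
split.
  move=> [n /(reaches_finP u_not_end) /combinator_steps_unit[]].
  by move=> /(reaches_before_prefix u_not_end) H1 /(reaches_before_prefix u_not_end).
move=> [[n1 /(reaches_finP u_not_end) H1] [n2 /(reaches_finP u_not_end) H2]].
case: (leqP n1 n2) => [le12 | /ltnW le21].
- exists n2; apply/(reaches_finP u_not_end); have [r Er] := prefix_leq t le12.
  by rewrite Er in H2 *; apply: steps_combinator_unitl.
- exists n1; apply/(reaches_finP u_not_end); have [r Er] := prefix_leq t le21.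
  by rewrite Er in H1 *; apply: steps_combinator_unitr.
Qed.

End Combinator.

Lemma conj_stepP (A : Type) (a b : mon A) mu r :
  mstep (MConj a b) mu r <-> combinator_step (@MConj A) Vyes Vno a b mu r.
Proof. by split=> H; inversion H; constructor. Qed.

Lemma disj_stepP (A : Type) (a b : mon A) mu r :
  mstep (MDisj a b) mu r <-> combinator_step (@MDisj A) Vno Vyes a b mu r.
Proof. by split=> H; inversion H; constructor. Qed.

Theorem mainTheorem4 (A : finType) (m1 m2 : mon A) (t : nat -> A) :
  reactive m1 -> reactive m2 ->
  (rejects_inf (MConj m1 m2) t <-> rejects_inf m1 t \/ rejects_inf m2 t) /\
  (accepts_inf (MConj m1 m2) t <-> accepts_inf m1 t /\ accepts_inf m2 t) /\
  (rejects_inf (MDisj m1 m2) t <-> rejects_inf m1 t /\ rejects_inf m2 t) /\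
  (accepts_inf (MDisj m1 m2) t <-> accepts_inf m1 t \/ accepts_inf m2 t).
Proof.
move=> R1 R2; split; [|split; [|split]].
- exact: (combinator_reaches_zero_inf (@conj_stepP A)).
- exact: (combinator_reaches_unit_inf (@conj_stepP A)).
- exact: (combinator_reaches_unit_inf (@disj_stepP A)).
- exact: (combinator_reaches_zero_inf (@disj_stepP A)).
Qed.
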